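(* Let $m \geq 2$ be an integer, let $1 \leq p \leq q < \infty$, and let $1 \leq p_i \leq q_i < \infty$ for $i = 1, 2, \dots, m$. Define $p^*$ by $\frac{1}{p^*} = \sum_{i=1}^{m} \frac{1}{p_i}$, and assume $\frac{1}{p^*} \leq \frac{1}{p}$ and $\sum_{i=1}^{m} \frac{1}{q_i} = \frac{1}{q}$. Then for all functions $f_i \in w\mathcal{M}^{p_i}_{q_i}(\mathbb{R}^n)$, $i=1,\dots,m$, we have $$ \Bigl\| \prod_{i=1}^{m} f_i \Bigr\|_{w\mathcal{M}^{p}_{q}} \leq \prod_{i=1}^{m} \left( \frac{p_i}{p^*} \right)^{\frac{1}{p_i}} \| f_i \|_{w\mathcal{M}^{p_i}_{q_i}}. $$
   Context: For $1 \leq p \leq q < \infty$, the weak Morrey space $w\mathcal{M}^p_q(\mathbb{R}^n)$ is the set of all measurable functions $f:\mathbb{R}^n \to \mathbb{R}$ such that $$\|f\|_{w\mathcal{M}^p_q} = \sup_{B = B(a,r),\ \gamma>0} |B|^{\frac{1}{q} - \frac{1}{p}}\, \gamma\, \bigl| \{x \in B: |f(x)| > \gamma \} \bigr|^{\frac{1}{p}} < \infty,$$ where the supremum is over all open balls $B=B(a,r)\subseteq\mathbb{R}^n$ (center $a$, radius $r>0$) and all $\gamma>0$, and $|\cdot|$ denotes Lebesgue measure. Equivalently, $\|f\|_{w\mathcal{M}^p_q} = \sup_{B} |B|^{\frac1q-\frac1p}\|f\|_{L^{p,\infty}(B)}$ with $\|f\|_{L^{p,\infty}(B)} = \sup_{\gamma>0}\gamma\,|\{x\in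 B:|f(x)|>\gamma\}|^{1/p}$. The product $\prod_{i=1}^m f_i$ is the pointwise product. *)

From HB Require Import structures.
From mathcomp Require Import all_boot all_order all_algebra.
From mathcomp Require Import all_classical all_reals all_analysis.
Set Implicit Arguments. Unset Strict Implicit. Unset Printing Implicit Defensive.
Import Order.TTheory GRing.Theory Num.Theory.
Local Open Scope classical_set_scope.
Local Open Scope ring_scope.

Definition box (R : realType) (n : nat) (a b : 'rV[R]_n) : set 'rV[R]_n :=
  [set x | forall i : 'I_n, a ord0 i <= x ord0 i /\ x ord0 i < b ord0 i].

Definition box_vol (R : realType) (n : nat) (a b : 'rV[R]_n) : R :=
  \prod_(i < n) Num.max 0 (b ord0 i - a ord0 i).

(* Lebesgue (outer) measure on R^n: infimum of total volumes of countable
   covers by boxes. On Lebesgue measurable sets it is Lebesgue measure. *)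
Definition leb (R : realType) (n : nat) (A : set 'rV[R]_n) : \bar R :=
  ereal_inf [set s : \bar R | exists a b : nat -> 'rV[R]_n,
     A `<=` \bigcup_k box (a k) (b k) /\
     s = (\sum_(0 <= k <oo) (box_vol (a k) (b k))%:E)%E].

Definition leb_measurable (R : realType) (n : nat) (A : set 'rV[R]_n) : Prop :=
  forall X : set 'rV[R]_n, leb X = (leb (X `&` A) + leb (X `&` ~` A))%E.

Definition leb_measurable_fun (R : realType) (n : nat) (f : 'rV[R]_n -> R)
  : Prop := forall c : R, leb_measurable [set x | c < f x].

Definition eball (R : realType) (n : nat) (a : 'rV[R]_n) (r : R)
  : set 'rV[R]_n :=
  [set x | Num.sqrt (\sum_(i < n) (x ord0 i - a ord0 i) ^+ 2) < r].

Definition wMorrey_norm (R : realType) (n : nat) (p q : R)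
  (f : 'rV[R]_n -> R) : \bar R :=
  ereal_sup [set y : \bar R | exists (a : 'rV[R]_n) (r g : R),
     0 < r /\ 0 < g /\
     y = (poweR (leb (eball a r)) (q^-1 - p^-1) * g%:E *
          poweR (leb (eball a r `&` [set x | (g < `|f x|)%R])) p^-1)%E].

Definition in_wMorrey (R : realType) (n : nat) (p q : R)
  (f : 'rV[R]_n -> R) : Prop :=
  leb_measurable_fun f /\ (wMorrey_norm p q f < +oo)%E.

From HB Require Import structures.
From mathcomp Require Import all_boot all_order all_algebra.
From mathcomp Require Import all_classical all_reals all_analysis.
From mathcomp Require Import ring lra.
Import Order.TTheory GRing.Theory Num.Theory numFieldNormedType.Exports.

(* Fix a ball B with |B| = v and a level g > 0.  For every factorisation
   g = prod_i s_i into positive factors, {|prod_i f_i| > g} is covered by the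
   sets {|f_i| >= s_i}, and the weak Morrey bound of f_i gives
   |B /\ {|f_i| >= s_i}| <= v (||f_i|| v^(-1/q_i) / s_i)^p_i.
   The factorisation that makes the terms of this sum proportional to p* / p_i
   (the equality case of the weighted AM-GM inequality) turns the sum into
   v (prod_i (p_i / p* )^(1/p_i) ||f_i|| v^(-1/q_i) / g)^p*.  The measured set
   lies in B, so its relative measure is at most 1 and raising it to
   1/p >= 1/p* instead of 1/p* only helps; sum_i 1/q_i = 1/q makes the powers
   of v cancel. *)

Set Implicit Arguments. Unset Strict Implicit.

Local Open Scope classical_set_scope.
Local Open Scope ring_scope.

Section LebesgueOuterMeasure.
Variables (R : realType) (n : nat).
Implicit Types (A B X : set 'rV[R]_n).

Lemma leb_ge0 A : (0 <= leb A)%E.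
Proof.
apply/ereal_infP => _ [a [b [_ ->]]]; apply: nneseries_ge0 => k _ _.
by rewrite lee_fin; apply: prodr_ge0 => i _; rewrite le_max lexx.
Qed.

Lemma le_leb A B : A `<=` B -> (leb A <= leb B)%E.
Proof.
move=> AB; apply: le_ereal_inf => _ [a [b [cov ->]]]; exists a, b.
by split => //; apply: subset_trans cov.
Qed.

Lemma leb_finE A : (leb A < +oo)%E -> exists2 L : R, leb A = L%:E & 0 <= L.
Proof.
move=> Afin; exists (fine (leb A)); last by apply: fine_ge0; apply: leb_ge0.
by rewrite fineK // ge0_fin_numE ?leb_ge0.
Qed.

Lemma leb_subset_finE A B (v : R) :
  leb B = v%:E -> A `<=` B -> exists2 L : R, leb A = L%:E & 0 <= L <= v.
Proof.
move=> BE AB; have AB' : (leb A <= v%:E)%E by rewrite -BE le_leb.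
have [L AE L_ge0] := leb_finE (le_lt_trans AB' (ltry v)).
by exists L; rewrite // L_ge0 -lee_fin -AE.
Qed.

Lemma leb_set0 : (0 < n)%N -> leb (@set0 'rV[R]_n) = 0%E.
Proof.
move=> n0; apply/le_anti; rewrite leb_ge0 andbT; case: n n0 => // k _.
apply: ereal_inf_lbound; exists (fun=> 0), (fun=> 0); split => //.
rewrite eseries0 // => j _ _.
by rewrite /box_vol big_ord_recl subrr maxxx mul0r.
Qed.

Lemma leb_eball_lty (a : 'rV[R]_n) (r : R) : (0 < n)%N -> (leb (eball a r) < +oo)%E.
Proof.
case: n a => // k a _.
pose c : 'rV[R]_k.+1 := const_mx r.
pose lo := fun j : nat => a - c.
pose hi := fun j : nat => if j == 0%N then a + c else a - c.
apply: (@le_lt_trans _ _ (\sum_(0 <= j <oo) (box_vol (lo j) (hi j))%:E)%E).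
  apply: ereal_inf_lbound; exists lo, hi; split => //.
  move=> x xB; exists 0%N => // i; rewrite /lo /hi /= /c !mxE.
  have : `|x ord0 i - a ord0 i| < r.
    apply: le_lt_trans xB; rewrite -sqrtr_sqr ler_sqrt; last first.
      by apply: sumr_ge0 => j _; apply: sqr_ge0.
    by rewrite (bigD1 i) //= lerDl; apply: sumr_ge0 => j _; apply: sqr_ge0.
  by rewrite ltr_norml => /andP[? ?]; split; [apply: ltW|]; lra.
rewrite (nneseries_split_cond 0 1); last first.
  by move=> j _; rewrite lee_fin; apply: prodr_ge0 => i _; rewrite le_max lexx.
rewrite eseries0 ?adde0 ?big_nat1 ?ltry // => j; rewrite add0n => j1 _.
by rewrite /lo /hi gtn_eqF // /box_vol big_ord_recl subrr maxxx mul0r.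
Qed.

Lemma leb_measurableC A : leb_measurable A -> leb_measurable (~` A).
Proof. by move=> mA X; rewrite setCK addeC. Qed.

Lemma leb_measurableI A B :
  leb_measurable A -> leb_measurable B -> leb_measurable (A `&` B).
Proof.
move=> mA mB X; rewrite (mA X) (mB (X `&` A)) (mA (X `&` ~` (A `&` B))).
have -> : X `&` ~` (A `&` B) `&` A = X `&` A `&` ~` B.
  by apply/seteqP; split => x /=; tauto.
have -> : X `&` ~` (A `&` B) `&` ~` A = X `&` ~` A.
  by apply/seteqP; split => x /=; tauto.
by rewrite setIA addeA.
Qed.

(* Finite subadditivity of [leb] is only available through Caratheodory
   measurability. *)
Lemma leb_le_sum_setC (I : eqType) (s : seq I) (G : I -> set 'rV[R]_n) X :
  (forall i, leb_measurable (G i)) ->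
  (leb X <= \sum_(i <- s) leb (X `&` ~` G i) +
            leb (X `&` [set x | forall i, i \in s -> G i x]))%E.
Proof.
move=> mG; elim: s X => [|j s IH] X.
  by rewrite big_nil add0e; apply: le_leb => x Xx; split.
rewrite (mG j X) big_cons addeC -addeA leeD2l //.
apply: le_trans (IH (X `&` G j)) _; apply: leeD.
  by apply: lee_sum => i _; apply: le_leb => x [[Xx _] Gx].
apply: le_leb => x [[Xx Gx] Gs]; split => // i.
by rewrite in_cons => /orP[/eqP ->|/Gs].
Qed.

End LebesgueOuterMeasure.

(* A box in R^0 has volume 1 (an empty product), so every set has infinite
   outer measure. *)
Lemma leb_dim0 (R : realType) (A : set 'rV[R]_0) : leb A = +oo%E.
Proof.
apply/eqP; rewrite eq_le leey /=; apply/ereal_infP => _ [a [b [_ ->]]].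
have vol1 j : box_vol (a j) (b j) = 1 by rewrite /box_vol big_ord0.
have ge_k k : ((k%:R)%:E <= \sum_(0 <= j <oo) (box_vol (a j) (b j))%:E)%E.
  apply: le_trans (nneseries_lim_ge k _); last by move=> j _ _; rewrite vol1 lee01.
  by under eq_bigr do rewrite vol1; rewrite sumEFin sumr_const_nat subn0.
move: ge_k; case: (\sum_(0 <= j <oo) _)%E => [x| |] // ge_k.
  by have := ge_k (Num.Def.trunc x).+1; rewrite lee_fin leNgt truncnS_gt.
by have := ge_k 0%N; rewrite leeNy_eq.
Qed.

Lemma powR_invK (R : realType) (x p : R) : 0 <= x -> 0 < p -> (x `^ p^-1) `^ p = x.
Proof. by move=> x0 p0; rewrite -powRrM mulVf ?gt_eqF // powRr1. Qed.

Lemma powR_inv (R : realType) (x r : R) : 0 <= x -> x^-1 `^ r = (x `^ r)^-1.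
Proof. by move=> x0; rewrite -powR_inv1 // -powRrM mulN1r powRN. Qed.

Lemma powR_sum (R : realType) (I : Type) (s : seq I) (a : I -> R) (x : R) :
  0 < x -> x `^ (\sum_(i <- s) a i) = \prod_(i <- s) x `^ a i.
Proof.
move=> x0; apply: (big_morph (powR x)); last by rewrite powRr0.
by move=> r t; rewrite powRD // (gt_eqF x0) implybT.
Qed.

Lemma powR_le_of_le_powR (R : realType) (x y a b : R) :
  0 <= x <= 1 -> 0 <= y -> 0 < a -> a^-1 <= b -> x <= y `^ a -> x `^ b <= y.
Proof.
move=> /andP[x0 x1] y0 a0 ab xy.
have b0 : 0 < b by apply: lt_le_trans ab; rewrite invr_gt0.
have [->|x_neq0] := eqVneq x 0; first by rewrite powR0 ?gt_eqF.
have x_gt0 : 0 < x by rewrite lt_neqAle eq_sym x_neq0.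
apply: le_trans (_ : x `^ a^-1 <= y).
  by apply: ger_powR => //; rewrite x_gt0.
have ainv_gt0 : 0 < a^-1 by rewrite invr_gt0.
rewrite -[y](powR_invK y0 ainv_gt0) invrK.
by apply: ge0_ler_powR; rewrite ?nnegrE ?invr_ge0 ?(ltW a0) ?powR_ge0.
Qed.

Lemma ler_prod_addgt0 (R : realType) (I : finType) (c a : I -> R) (x : R) :
  (forall e, 0 < e -> x <= \prod_i (c i * (a i + e))) -> x <= \prod_i (c i * a i).
Proof.
move=> hx.
have cvg_prod : \prod_i (c i * (a i + e)) @[e --> (0 : R)^'+] --> \prod_i (c i * a i).
  apply: cvg_at_right_filter; apply: cvg_big => [|i _]; first exact: mul_continuous.
  have -> : c i * a i = c i * (a i + 0) by rewrite addr0.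
  by apply: cvgM; [exact: cvg_cst|apply: cvgD; [exact: cvg_cst|exact: cvg_id]].
apply: (closed_cvg _ (@closed_ge _ x) _ _ cvg_prod).
by near=> e; apply: hx; near: e; exact: nbhs_right_gt.
Unshelve. all: by end_near.
Qed.

Lemma wMorrey_norm_ge0 (R : realType) (n : nat) (p q : R) (f : 'rV[R]_n -> R) :
  (0 <= wMorrey_norm p q f)%E.
Proof.
apply: le_trans (ereal_sup_ubound _); last by exists 0, 1, 1.
by rewrite mule_ge0 ?poweR_ge0 // mule_ge0 ?poweR_ge0.
Qed.

Lemma wMorrey_norm_dim0 (R : realType) (p q : R) (f : 'rV[R]_0 -> R) :
  0 < p -> wMorrey_norm p q f = +oo%E.
Proof.
move=> p0; apply/eqP; rewrite eq_le leey /=; apply: ereal_sup_ubound.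
exists 0, 1, 1; split => //; split => //.
rewrite !leb_dim0 mule1 (@poweRyr _ p^-1) ?invr_neq0 ?gt_eqF //.
have [->|ne0] := eqVneq (q^-1 - p^-1) 0; first by rewrite poweRe0 mul1e.
by rewrite poweRyr // mulyy.
Qed.

Section LevelSets.
Variables (R : realType) (n : nat) (p q : R) (h : 'rV[R]_n -> R).
Variables (a : 'rV[R]_n) (r v : R).
Hypotheses (p_gt0 : 0 < p) (r_gt0 : 0 < r) (v_gt0 : 0 < v).
Hypothesis ballE : leb (eball a r) = v%:E.

Lemma leb_eball_gt_level (N t : R) :
  0 < t -> wMorrey_norm p q h = N%:E ->
  (leb (eball a r `&` [set x | (t < `|h x|)%R]) <=
   (v * (N * v `^ (- q^-1) / t) `^ p)%:E)%E.
Proof.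
move=> t_gt0 normE.
set Y := _ `&` _; have [L YE /andP[L_ge0 _]] := leb_subset_finE (A := Y) ballE (@subIsetl _ _ _).
have weak : v `^ (q^-1 - p^-1) * t * L `^ p^-1 <= N.
  rewrite -lee_fin -normE; apply: ereal_sup_ubound.
  by exists a, r, t; rewrite ballE YE.
have vp_gt0 : 0 < v `^ p^-1 by apply: powR_gt0.
have vq_gt0 : 0 < v `^ q^-1 by apply: powR_gt0.
have N_ge0 : 0 <= N by rewrite -lee_fin -normE wMorrey_norm_ge0.
have rhs_ge0 : 0 <= N * v `^ (- q^-1) / t.
  by rewrite divr_ge0 ?mulr_ge0 ?powR_ge0 ?(ltW t_gt0).
rewrite YE lee_fin -[L](powR_invK L_ge0 p_gt0) -[v in v * _](powR_invK (ltW v_gt0) p_gt0).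
rewrite -powRM ?powR_ge0 //; apply: ge0_ler_powR;
  rewrite ?nnegrE ?(ltW p_gt0) ?powR_ge0 ?(mulr_ge0 (powR_ge0 _ _) rhs_ge0) //.
rewrite powRN; move: weak; rewrite powRB; last by rewrite (gt_eqF v_gt0) implybT.
move: (v `^ p^-1) (v `^ q^-1) (L `^ p^-1) vp_gt0 vq_gt0 => x y z x0 y0 weak.
have -> : x * (N * y^-1 / t) = N / (y / x * t) by field; rewrite !gt_eqF.
by rewrite ler_pdivlMr 1?mulrC // mulr_gt0 // divr_gt0.
Qed.

Lemma leb_eball_ge_level (N K s : R) :
  0 < s -> wMorrey_norm p q h = N%:E -> N < K ->
  (leb (eball a r `&` [set x | (s <= `|h x|)%R]) <=
   (v * (K * v `^ (- q^-1) / s) `^ p)%:E)%E.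
Proof.
move=> s_gt0 normE NK.
have N_ge0 : 0 <= N by rewrite -lee_fin -normE wMorrey_norm_ge0.
(* The norm only controls strict level sets; t < s is chosen with N / t <= K / s. *)
pose t := s * (N + K) / (2 * K).
have t_gt0 : 0 < t by rewrite divr_gt0 ?mulr_gt0 //; lra.
have ts : t < s by rewrite ltr_pdivrMr ?mulr_gt0 //; nra.
apply: le_trans (le_trans (le_leb _) (leb_eball_gt_level t_gt0 normE)) _.
  by move=> x [Bx hx]; split => //; apply: lt_le_trans hx.
have w_gt0 : 0 < v `^ (- q^-1) by apply: powR_gt0.
move: (v `^ (- q^-1)) w_gt0 => w w_gt0.
have K_gt0 : 0 < K by apply: le_lt_trans NK.
have key : N * w / t <= K * w / s.
  have -> : N * w / t = K * w / s * (2 * N / (N + K)).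
    by rewrite /t; field; rewrite !gt_eqF //; lra.
  rewrite ler_piMr ?divr_ge0 ?mulr_ge0 ?(ltW w_gt0) ?(ltW s_gt0) ?(ltW K_gt0) //.
  by rewrite ler_pdivrMr; lra.
have lhs_ge0 : 0 <= N * w / t by apply: divr_ge0; [apply: mulr_ge0 N_ge0 _|]; apply: ltW.
rewrite lee_fin ler_wpM2l ?(ltW v_gt0) // ge0_ler_powR ?nnegrE ?(ltW p_gt0) //.
exact: le_trans key.
Qed.

End LevelSets.

Lemma leb_prod_gt_le_sum (R : realType) (n : nat) (I : finType)
    (f : I -> 'rV[R]_n -> R) (s : I -> R) (X : set 'rV[R]_n) :
  (0 < n)%N -> (forall i, leb_measurable_fun (f i)) ->
  (leb (X `&` [set x | (\prod_i s i < `|\prod_i f i x|)%R]) <=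
   \sum_i leb (X `&` [set x | (s i <= `|f i x|)%R]))%E.
Proof.
move=> n_gt0 mf.
(* Only the sets {c < f} are known to be measurable, hence the band
   {-s < f <= s} instead of {|f| < s}. *)
pose G i := [set x | - s i < f i x] `&` ~` [set x | s i < f i x].
have mG i : leb_measurable (G i).
  by apply: leb_measurableI; [|apply: leb_measurableC]; apply: mf.
set E := X `&` [set x | \prod_i s i < `|\prod_i f i x|].
apply: le_trans (leb_le_sum_setC (index_enum I) E mG) _.
have -> : E `&` [set x | forall i, i \in index_enum I -> G i x] = set0.
  apply/seteqP; split => x //= [[_ prod_gt] inG].
  suff : `|\prod_i f i x| <= \prod_i s i by rewrite leNgt prod_gt.
  rewrite normr_prod; apply: ler_prod => i _.
  have [lo /negP hi] := inG i (mem_index_enum i).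
  by rewrite normr_ge0 ler_norml (ltW lo) leNgt.
rewrite leb_set0 // adde0; apply: lee_sum => i _.
apply: le_leb => x [[Xx _] notG]; split => //=.
have [lt|le] := ltP (s i) (f i x); first exact: le_trans (ltW lt) (ler_norm _).
have le_neg : f i x <= - s i.
  rewrite leNgt; apply/negP => lo; apply: notG; split => //=.
  by apply/negP; rewrite -leNgt.
by rewrite -normrN; apply: le_trans (ler_norm _); lra.
Qed.

Section ProductEstimate.
Variables (R : realType) (I : finType) (p_ : I -> R).
Hypotheses (I_gt0 : (0 < #|I|)%N) (p_gt0 : forall i, 0 < p_ i).
Local Notation pstar := (\sum_i (p_ i)^-1)^-1.

Lemma pstar_gt0 : 0 < pstar.
Proof.
have [i0 _] := card_gt0P I_gt0.
rewrite invr_gt0 (bigD1 i0) //= ltr_pwDl ?invr_gt0 //.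
by apply: sumr_ge0 => i _; rewrite invr_ge0 ltW.
Qed.

Lemma exists_balanced_factorization (M : I -> R) (g : R) :
  (forall i, 0 < M i) -> 0 < g ->
  exists s : I -> R, [/\ forall i, 0 < s i, \prod_i s i = g &
    \sum_i (M i / s i) `^ p_ i =
    (\prod_i ((p_ i / pstar) `^ (p_ i)^-1 * M i) / g) `^ pstar].
Proof.
move=> M_gt0 g_gt0.
have sum_ps : \sum_i pstar * (p_ i)^-1 = 1.
  by rewrite -mulr_sumr mulVf // gt_eqF // -invr_gt0 pstar_gt0.
move: pstar_gt0 sum_ps; set ps := pstar; clearbody ps => ps_gt0 sum_ps.
pose c i := (p_ i / ps) `^ (p_ i)^-1.
have c_gt0 i : 0 < c i by rewrite powR_gt0 // divr_gt0.
pose P := \prod_i (c i * M i).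
have P_gt0 : 0 < P by apply: prodr_gt0 => i _; rewrite mulr_gt0.
pose k := g / P.
have k_gt0 : 0 < k by rewrite divr_gt0.
exists (fun i => c i * M i * k `^ (ps / p_ i)); split.
- by move=> i; apply: mulr_gt0; [apply: mulr_gt0|apply: powR_gt0].
- by rewrite big_split /= -powR_sum // sum_ps powRr1 ?ltW // /k mulrC divfK ?gt_eqF.
have term i : (M i / (c i * M i * k `^ (ps / p_ i))) `^ p_ i
              = ps * (p_ i)^-1 * (k `^ ps)^-1.
  have ck_gt0 : 0 < c i * k `^ (ps / p_ i) := mulr_gt0 (c_gt0 i) (powR_gt0 _ k_gt0).
  have -> : M i / (c i * M i * k `^ (ps / p_ i)) = (c i * k `^ (ps / p_ i))^-1.
    move: (c_gt0 i) (M_gt0 i) (powR_gt0 (ps / p_ i) k_gt0).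
    by move: (c i) (M i) (k `^ _) => x y z x0 y0 z0; field; rewrite !gt_eqF.
  rewrite powR_inv ?(ltW ck_gt0) // powRM ?powR_ge0 // powR_invK ?divr_ge0 ?ltW //.
  rewrite -powRrM divfK ?gt_eqF //.
  by move: (powR_gt0 ps k_gt0) => kps_gt0; field; rewrite !gt_eqF.
rewrite (eq_bigr _ (fun i _ => term i)) -mulr_suml sum_ps mul1r.
by rewrite -invf_div powR_inv // ltW.
Qed.

Lemma le_prod_of_factorization_bounds (p : R) (q_ K : I -> R) (v l g : R) :
  0 < v -> 0 <= l <= v -> 0 < g -> pstar^-1 <= p^-1 -> (forall i, 0 < K i) ->
  (forall s : I -> R, (forall i, 0 < s i) -> \prod_i s i = g ->
     l <= \sum_i v * (K i * v `^ (- (q_ i)^-1) / s i) `^ p_ i) ->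
  v `^ (\sum_i (q_ i)^-1 - p^-1) * g * l `^ p^-1 <=
  \prod_i ((p_ i / pstar) `^ (p_ i)^-1 * K i).
Proof.
move=> v_gt0 /andP[l_ge0 lv] g_gt0 pp K_gt0 l_le.
pose M i := K i * v `^ (- (q_ i)^-1).
have M_gt0 i : 0 < M i by rewrite mulr_gt0 ?powR_gt0.
have [s [s_gt0 sg sumE]] := exists_balanced_factorization M_gt0 g_gt0.
set P := \prod_i _ in sumE.
have P_gt0 : 0 < P by apply: prodr_gt0 => i _; rewrite mulr_gt0 ?powR_gt0 ?divr_gt0 ?pstar_gt0.
have ratio_le : (l / v) `^ p^-1 <= P / g.
  apply: (powR_le_of_le_powR _ _ pstar_gt0 pp).
  - by rewrite divr_ge0 ?ler_pdivrMr ?mul1r // ltW.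
  - by rewrite divr_ge0 // ltW.
  by rewrite ler_pdivrMr // mulrC -sumE mulr_sumr; apply: l_le.
have prodE : \prod_i ((p_ i / pstar) `^ (p_ i)^-1 * K i) = v `^ (\sum_i (q_ i)^-1) * P.
  rewrite powR_sum // -big_split; apply: eq_bigr => i _ /=.
  rewrite /M powRN; move: (v `^ _) (powR_gt0 (q_ i)^-1 v_gt0) => w w_gt0.
  by field; rewrite gt_eqF.
rewrite prodE powRB ?(gt_eqF v_gt0) ?implybT //.
have lE : l = l / v * v by rewrite divfK // lt0r_neq0.
rewrite {1}lE powRM ?divr_ge0 ?(ltW v_gt0) //.
have vp_gt0 : 0 < v `^ p^-1 by apply: powR_gt0.
have vq_gt0 : 0 < v `^ (\sum_i (q_ i)^-1) by apply: powR_gt0.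
apply: (@le_trans _ _ (v `^ (\sum_i (q_ i)^-1) * g * (P / g))); last first.
  by rewrite -mulrA (mulrC g) divfK // lt0r_neq0.
have -> : v `^ (\sum_i (q_ i)^-1) / v `^ p^-1 * g * ((l / v) `^ p^-1 * v `^ p^-1)
          = v `^ (\sum_i (q_ i)^-1) * g * (l / v) `^ p^-1.
  by field; rewrite gt_eqF.
by rewrite ler_wpM2l // mulr_ge0 ?ltW.
Qed.

Lemma wMorrey_prod_ball_le (n : nat) (p : R) (q_ N : I -> R)
    (f : I -> 'rV[R]_n.+1 -> R) (a : 'rV[R]_n.+1) (r g : R) :
  pstar^-1 <= p^-1 -> (forall i, leb_measurable_fun (f i)) ->
  (forall i, wMorrey_norm (p_ i) (q_ i) (f i) = (N i)%:E) -> 0 < r -> 0 < g ->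
  (poweR (leb (eball a r)) (\sum_i (q_ i)^-1 - p^-1) * g%:E *
   poweR (leb (eball a r `&` [set x | (g < `|\prod_i f i x|)%R])) p^-1 <=
   (\prod_i ((p_ i / pstar) `^ (p_ i)^-1 * N i))%:E)%E.
Proof.
move=> pp mf normE r_gt0 g_gt0.
have [v ballE v_ge0] := leb_finE (leb_eball_lty a r (ltn0Sn n)).
set E := _ `&` _; have [l EE /andP[l_ge0 lv]] := leb_subset_finE (A := E) ballE (@subIsetl _ _ _).
have N_ge0 i : 0 <= N i by rewrite -lee_fin -normE wMorrey_norm_ge0.
have pinv_gt0 : 0 < p^-1 by apply: lt_le_trans pp; rewrite invr_gt0 pstar_gt0.
rewrite ballE EE !poweR_EFin -!EFinM lee_fin.
have [v0|v_neq0] := eqVneq v 0.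
  have -> : l = 0 by apply/le_anti; rewrite l_ge0 andbT -v0.
  rewrite powR0 ?gt_eqF // mulr0.
  by apply: prodr_ge0 => i _; rewrite mulr_ge0 ?powR_ge0.
have v_gt0 : 0 < v by rewrite lt_neqAle eq_sym v_neq0.
(* Perturbing the norms keeps the balanced factorisation defined when some
   norm vanishes. *)
apply: ler_prod_addgt0 => e e_gt0.
apply: le_prod_of_factorization_bounds => //; first by rewrite l_ge0.
  by move=> i; apply: lt_le_trans e_gt0 _; rewrite lerDr.
move=> s s_gt0 sg; rewrite -lee_fin -EE -sumEFin /E -sg.
apply: le_trans (leb_prod_gt_le_sum _ _ _ _) _ => //.
apply: lee_sum => i _; apply: leb_eball_ge_level => //.
by rewrite ltrDl.
Qed.

End ProductEstimate.

Theorem theorem2p2 (R : realType) (n m : nat) (p q : R)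
  (p_ q_ : 'I_m -> R) (f : 'I_m -> 'rV[R]_n -> R) :
  (2 <= m)%N ->
  1 <= p -> p <= q ->
  (forall i, 1 <= p_ i /\ p_ i <= q_ i) ->
  let pstar := (\sum_(i < m) (p_ i)^-1)^-1 in
  pstar^-1 <= p^-1 ->
  \sum_(i < m) (q_ i)^-1 = q^-1 ->
  (forall i, in_wMorrey (p_ i) (q_ i) (f i)) ->
  (wMorrey_norm p q (fun x => (\prod_(i < m) f i x)%R)
    <= \prod_(i < m) (((p_ i / pstar) `^ (p_ i)^-1)%R%:E
                      * wMorrey_norm (p_ i) (q_ i) (f i)))%E.
Proof.
move=> m_ge2 _ _ p_ge1 pstar pp sum_q hf.
have m_gt0 : (0 < m)%N by apply: leq_trans m_ge2.
have p_gt0 i : 0 < p_ i by apply: lt_le_trans ltr01 (p_ge1 i).1.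
case: n f hf => [|n] f hf.
  by have [_] := hf (Ordinal m_gt0); rewrite wMorrey_norm_dim0.
pose N i := fine (wMorrey_norm (p_ i) (q_ i) (f i)).
have normE i : wMorrey_norm (p_ i) (q_ i) (f i) = (N i)%:E.
  by rewrite fineK // ge0_fin_numE ?wMorrey_norm_ge0 //; case: (hf i).
under eq_bigr do rewrite normE -EFinM.
rewrite prodEFin; apply: ge_ereal_sup => _ [a [r [g [r_gt0 [g_gt0 ->]]]]].
rewrite -sum_q; apply: wMorrey_prod_ball_le; rewrite ?card_ord // => i.
by case: (hf i).
Qed.
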